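(* If $n\ge k\ge 3$, then the maximum defining $g_k(n)$ is achieved by an equitable partition; that is, there is a partition $n_1+\dots+n_k=n$ with $|n_i-n_j|\le1$ for all $i\ne j$ such that $g_k(n)=\sum_{i=1}^k g_k(n_i)+\prod_{i=1}^k n_i$.
   Context: The function $g_k$ is defined by: $g_k(s)=0$ for $0\le s<k$, and for $s\ge k\ge 3$, $g_k(s)=\max\left(\sum_{i=1}^k g_k(s_i)+\prod_{i=1}^k s_i\right)$, the maximum over all partitions $s_1+\dots+s_k=s$ into nonnegative integers with $s_i<s$ for each $i$. *)

From mathcomp Require Import all_boot.
Set Implicit Arguments. Unset Strict Implicit. Unset Printing Implicit Defensive.

(* gk_fuel k fuel s : the recursion defining g_k, with a fuel argument that
   is always large enough (fuel > s) when called from g.  Each s_i <= s,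
   so we range over {ffun 'I_k -> 'I_s.+1}. *)
Fixpoint gk_fuel (k fuel s : nat) : nat :=
  match fuel with
  | 0 => 0
  | f.+1 =>
      if s < k then 0
      else \max_(t : {ffun 'I_k -> 'I_s.+1} |
                   ((\sum_(i < k) (t i : nat)) == s) && [forall i, (t i : nat) < s])
             ((\sum_(i < k) gk_fuel k f (t i)) + \prod_(i < k) (t i : nat))
  end.

Definition g (k s : nat) : nat := gk_fuel k s.+1 s.

From mathcomp Require Import all_boot zify.

(* Let P_K(m) be the product of the parts of the equitable partition of m into
   K parts.  A smoothing argument shows that it is the largest product of K
   naturals with sum m; it is convex in m, with increments
   P_K(m+1) - P_K(m) = P_{K-1}(m - m/K).
   By simultaneous induction on n, g_k(n) is attained at the equitable
   partition, and g_k(n+1) - g_k(n) >= g_k(b+1) - g_k(b) + P_{k-1}(n-b) for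
   n/k <= b <= n.  Lowering the largest part b+1 of an admissible partition of
   n+1 by one gives an admissible partition of n and costs g_k(b+1) - g_k(b)
   plus the product of the other parts, at most P_{k-1}(n-b).  Since the
   equitable partition of b+1 arises from that of b by raising a part b/k, the
   inequality at c = n/k and the convexity of P_{k-1} bound this cost by
   g_k(c+1) - g_k(c) + P_{k-1}(n-c), which is exactly what is gained from the
   equitable partition of n to that of n+1. *)

Definition eqprod (K m : nat) := (m %/ K).+1 ^ (m %% K) * (m %/ K) ^ (K - m %% K).

Definition eqpart (K m : nat) (i : 'I_K) := m %/ K + (i < m %% K).

Lemma big_ord_ltn_split {R : Type} {idx : R} (op : Monoid.law idx) (F : bool -> R) k r :
  r <= k ->
  \big[op/idx]_(i < k) F (i < r) =
    op (\big[op/idx]_(i < r) F true) (\big[op/idx]_(i < k - r) F false).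
Proof.
move=> rk; rewrite -(big_mkord predT (fun i => F (i < r))).
rewrite (@big_cat_nat _ _ _ r 0 k _ _ (leq0n r) rk) !big_const_ord.
rewrite (eq_big_nat _ _ (F2 := fun=> F true)); last by move=> i /andP[_ ->].
rewrite [X in op _ X](eq_big_nat _ _ (F2 := fun=> F false)); last first.
  by move=> i /andP[ri _]; rewrite ltnNge ri.
by rewrite !big_const_nat subn0.
Qed.

Lemma bigC1 {R : Type} {idx : R} (op : Monoid.com_law idx) {I : finType} (i0 : I)
    (F : I -> R) :
  \big[op/idx]_i F i = op (F i0) (\big[op/idx]_(i in [set~ i0]) F i).
Proof. by rewrite (bigD1 i0) //; congr (op _ _); apply: eq_bigl => i; rewrite in_setC1. Qed.

Lemma sum_eqpart K m : 0 < K -> \sum_i eqpart K m i = m.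
Proof.
move=> K0; rewrite (big_ord_ltn_split _ (fun b => m %/ K + b)); last exact/ltnW/ltn_pmod.
rewrite /= !sum_nat_const !card_ord addn1 addn0 [RHS](divn_eq m K).
have := ltn_pmod m K0; nia.
Qed.

Lemma prod_eqpart K m : 0 < K -> \prod_i eqpart K m i = eqprod K m.
Proof.
move=> K0; rewrite (big_ord_ltn_split _ (fun b => m %/ K + b)); last exact/ltnW/ltn_pmod.
by rewrite /= !prod_nat_const !card_ord addn1 addn0.
Qed.

Lemma eqpart_diff K m (i j : 'I_K) : eqpart K m i - eqpart K m j <= 1.
Proof. by rewrite /eqpart; case: (i < _); case: (j < _); lia. Qed.

Lemma eqprod_divmod K q r : r < K -> eqprod K (q * K + r) = q.+1 ^ r * q ^ (K - r).
Proof.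
move=> rK; have K0 : 0 < K by case: K rK.
by rewrite /eqprod divnMDl // divn_small // addn0 modnMDl modn_small.
Qed.

Lemma eqprod_mul K q : eqprod K (q * K) = q ^ K.
Proof.
case: K => [|K]; first by rewrite /eqprod muln0 div0n mod0n.
by rewrite -[q * _]addn0 eqprod_divmod // expn0 mul1n subn0.
Qed.

Lemma eqprodn0 K : 0 < K -> eqprod K 0 = 0.
Proof. by move=> K0; rewrite -(mul0n K) eqprod_mul exp0n. Qed.

(* [eqprod K.-1 (m - m %/ K)] is the product of the equitable partition of [m]
   with one smallest part removed. *)
Lemma eqprodS K m : 0 < K -> eqprod K m.+1 = eqprod K m + eqprod K.-1 (m - m %/ K).
Proof.
move=> K0; have [q [r [rK ->]]] : exists q r, r < K /\ m = q * K + r.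
  by exists (m %/ K), (m %% K); split; [exact: ltn_pmod | exact: divn_eq].
have -> : (q * K + r) %/ K = q by rewrite divnMDl // divn_small // addn0.
have [rK1|eK] : r.+1 < K \/ r.+1 = K by lia.
  have -> : q * K + r - q = q * K.-1 + r by case: K {K0 rK} rK1 => // K _; rewrite mulnS; lia.
  rewrite -addnS !eqprod_divmod //; last by lia.
  have -> : K - r = (K - r.+1).+1 by lia.
  have -> : K.-1 - r = K - r.+1 by lia.
  rewrite !expnS; lia.
rewrite -{}eK {K0 rK} /=.
have -> : (q * r.+1 + r).+1 = q.+1 * r.+1 by rewrite mulSn; lia.
have -> : q * r.+1 + r - q = q.+1 * r by rewrite mulnS mulSn; lia.
rewrite !eqprod_mul eqprod_divmod // subSnn expnS; lia.
Qed.

Lemma eqprod0n m : eqprod 0 m = 1.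
Proof. by rewrite /eqprod divn0 modn0 exp1n sub0n expn0. Qed.

Lemma leq_eqprod K m n : m <= n -> eqprod K m <= eqprod K n.
Proof.
case: K => [|K]; first by rewrite !eqprod0n.
move=> /subnK <-; elim: (n - m) => // d IH.
by rewrite addSn eqprodS //; apply: leq_trans IH (leq_addr _ _).
Qed.

Lemma leq_sub_div {K m n} : 0 < K -> m <= n -> m - m %/ K <= n - n %/ K.
Proof.
move=> K0 /subnK <-; elim: (n - m) => // d IH.
rewrite addSn divnS //; have := leq_div (d + m) K; have := leq_b1 (K %| (d + m).+1); lia.
Qed.

Lemma eqprod_convex K w x y z : 1 < K -> w <= x -> w <= z -> x + z = w + y ->
  eqprod K x + eqprod K z <= eqprod K y + eqprod K w.
Proof.
move=> K1 wx wz xz; have [d ez] : exists d, z = w + d by exists (z - w); lia.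
have ey : y = x + d by lia.
rewrite {}ey {}ez {xz wz}; elim: d => [|d IH]; first by rewrite !addn0 addnC.
have incr : eqprod K.-1 (w + d - (w + d) %/ K) <= eqprod K.-1 (x + d - (x + d) %/ K).
  by apply/leq_eqprod/leq_sub_div; rewrite ?leq_add2r //; lia.
rewrite !addnS !eqprodS; lia.
Qed.

Lemma prod_leq_eqprod (I : finType) (A : {set I}) (F : I -> nat) :
  \prod_(i in A) F i <= eqprod #|A| (\sum_(i in A) F i).
Proof.
move eK : #|A| => K; elim: K A F eK => [|K IHK] A F eK.
  by rewrite (cards0_eq eK) !big_set0 eqprod0n.
have A0 : 0 < #|A| by rewrite eK.
move eS : (\sum_(i in A) F i) => m; elim: m F eS => [|m IHm] F eS.
  have /card_gt0P [i0 Ai0] := A0.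
  have Fi0 : F i0 = 0 by apply/eqP; rewrite -leqn0 -eS (big_setD1 _ Ai0) leq_addr.
  by rewrite (big_setD1 _ Ai0) Fi0.
have [i0 Ai0 maxF] := eq_bigmax_cond F A0.
set x := F i0 in maxF.
have Fle i : i \in A -> F i <= x by rewrite -maxF; apply: leq_bigmax_cond.
have cardA' : #|A :\ i0| = K by apply/eqP; rewrite -eqSS -eK (cardsD1 i0 A) Ai0.
have sumA : m.+1 = x + \sum_(i in A :\ i0) F i by rewrite -eS (big_setD1 _ Ai0).
have m_lt_Kx : m.+1 <= K.+1 * x.
  by rewrite -eS -eK -sum_nat_const; apply: leq_sum.
pose F' i := F i - (i == i0).
have F'E i : i \in A :\ i0 -> F' i = F i.
  by rewrite in_setD1 /F' => /andP[/negbTE -> _]; rewrite subn0.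
have sumF' : \sum_(i in A) F' i = m.
  rewrite (big_setD1 _ Ai0) (eq_bigr _ F'E) /= /F' eqxx; lia.
have := IHm F' sumF'; rewrite (big_setD1 _ Ai0) (eq_bigr _ F'E) /= /F' eqxx subn1 => IHF'.
have := IHK _ F cardA'; set Q := \prod_(i in _) _ => IHQ.
rewrite (big_setD1 _ Ai0) eqprodS //= -/x.
have x0 : 0 < x by case: (posnP x) m_lt_Kx => // ->; rewrite muln0.
rewrite -[x in x * Q](prednK x0) mulSn addnC leq_add //.
apply: (leq_trans IHQ); apply: leq_eqprod; have := ltn_divLR m x (ltn0Sn K); lia.
Qed.

Lemma gk_fuel_enough k f s : s < f -> gk_fuel k f s = g k s.
Proof.
rewrite /g; elim/ltn_ind: s f => s IH [|f] // sf /=.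
case: ifP => // _; apply: eq_bigr => t /andP[_ /forallP ht].
congr (_ + _); apply: eq_bigr => i _.
by rewrite IH ?(IH _ (ht i)) //; apply: leq_trans (ht i) _.
Qed.

Lemma gE k s : g k s =
  if s < k then 0
  else \max_(t : {ffun 'I_k -> 'I_s.+1} |
               ((\sum_(i < k) (t i : nat)) == s) && [forall i, (t i : nat) < s])
         ((\sum_(i < k) g k (t i)) + \prod_(i < k) (t i : nat)).
Proof.
rewrite {1}/g /=; case: ifP => // _; apply: eq_bigr => t /andP[_ /forallP ht].
by congr (_ + _); apply: eq_bigr => i _; apply: gk_fuel_enough.
Qed.

Lemma g_small {k s} : s < k -> g k s = 0.
Proof. by move=> sk; rewrite gE sk. Qed.

Definition score k (u : 'I_k -> nat) := \sum_i g k (u i) + \prod_i u i.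

Lemma score_leq_g k s (u : 'I_k -> nat) :
  \sum_i u i = s -> (forall i, u i < s) -> score k u <= g k s.
Proof.
move=> su us; have [sk|ks] := ltnP s k.
  have [i0 /eqP ui0] : exists i, u i == 0.
    apply/existsP; apply: contraLR sk; rewrite negb_exists -leqNgt => /forallP u_gt0.
    by rewrite -su -[X in X <= _]card_ord -sum1_card; apply: leq_sum => i _; rewrite lt0n u_gt0.
  rewrite /score (g_small sk) [X in _ + X](bigD1 i0) //= ui0 mul0n addn0 leqn0 big1 // => i _.
  by apply: g_small; apply: ltn_trans (us i) sk.
rewrite gE ltnNge ks /=.
pose t : {ffun 'I_k -> 'I_s.+1} := [ffun i => inord (u i)].
have tE i : (t i : nat) = u i by rewrite ffunE inordK // ltnS ltnW.
apply: (bigmax_sup t).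
  by rewrite (eq_bigr _ (fun i _ => tE i)) su eqxx; apply/forallP => i; rewrite tE.
by apply: eq_leq; rewrite /score; congr (_ + _); apply: eq_bigr => i _; rewrite tE.
Qed.

Lemma g_leq_of_score k s M : k <= s ->
  (forall u : 'I_k -> nat, \sum_i u i = s -> (forall i, u i < s) -> score k u <= M) ->
  g k s <= M.
Proof.
move=> ks scoreM; rewrite gE ltnNge ks /=.
apply/bigmax_leqP => t /andP[/eqP st /forallP ts].
exact: (scoreM (fun i => t i)).
Qed.

Lemma score_eqpart k m : 0 < k ->
  score k (eqpart k m) = m %% k * g k (m %/ k).+1 + (k - m %% k) * g k (m %/ k) + eqprod k m.
Proof.
move=> k0; rewrite /score prod_eqpart //.
rewrite (big_ord_ltn_split _ (fun b => g k (m %/ k + b))); last exact/ltnW/ltn_pmod.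
by rewrite /= !sum_nat_const !card_ord addn1 addn0.
Qed.

Lemma score_eqpartS {k} m : 0 < k ->
  score k (eqpart k m.+1) + g k (m %/ k) =
    score k (eqpart k m) + g k (m %/ k).+1 + eqprod k.-1 (m - m %/ k).
Proof.
move=> k0; rewrite !score_eqpart // eqprodS //.
have [q [r [rk ->]]] : exists q r, r < k /\ m = q * k + r.
  by exists (m %/ k), (m %% k); split; [exact: ltn_pmod | exact: divn_eq].
rewrite divnMDl // modnMDl (divn_small rk) (modn_small rk) addn0.
have [rk1|rk1] : r.+1 < k \/ r.+1 = k by lia.
  by rewrite -addnS divnMDl // modnMDl (divn_small rk1) (modn_small rk1) addn0; lia.
have -> : (q * k + r).+1 = q.+1 * k + 0 by rewrite mulSn; lia.
by rewrite divnMDl // modnMDl div0n mod0n addn0; lia.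
Qed.

Lemma score_eqpart_small k m : 1 < k -> m < k -> score k (eqpart k m) = 0.
Proof.
move=> k1 mk; have k0 := ltnW k1.
rewrite score_eqpart // /eqprod (divn_small mk) (modn_small mk).
by rewrite !g_small // exp0n ?subn_gt0 // !muln0.
Qed.

Lemma score_eqpart_leq_g k m : 2 < k -> score k (eqpart k m) <= g k m.
Proof.
move=> k2; have [mk|km] := ltnP m k; first by rewrite score_eqpart_small // ltnW.
apply: score_leq_g; first exact/sum_eqpart/ltnW/ltnW.
move=> i; rewrite /eqpart; have := leq_b1 (i < m %% k).
have : m %/ k < m.-1 by rewrite ltn_divLR; nia.
lia.
Qed.

(* Additive form of g(m+1) - g(m) >= g(b+1) - g(b) + eqprod (k-1) (m-b). *)
Definition g_incr_bound k m := forall b, m %/ k <= b <= m ->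
  g k b.+1 + g k m + eqprod k.-1 (m - b) <= g k b + g k m.+1.

Section InductionStep.

Variables k n : nat.
Hypothesis k_gt2 : 2 < k.
Hypothesis IHg : forall {m}, m <= n -> g k m = score k (eqpart k m).
Hypothesis IHincr : forall {m}, m < n -> g_incr_bound k m.

Lemma g_incr_leq_div {b} : n %/ k <= b < n ->
  g k b.+1 + g k (n %/ k) + eqprod k.-1 (n - b) <=
    g k b + g k (n %/ k).+1 + eqprod k.-1 (n - n %/ k).
Proof.
move=> /andP[cb bn]; have k0 : 0 < k by lia.
have incr_b := score_eqpartS b k0.
rewrite -!IHg in incr_b; [|lia|lia].
have cn : n %/ k < n by apply: ltn_Pdiv; lia.
have incr_c := IHincr cn (b %/ k).
have /incr_c {}incr_c : (n %/ k) %/ k <= b %/ k <= n %/ k.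
  by rewrite !leq_div2r // ltnW.
have sub_bn := leq_sub_div k0 (ltnW bn).
have bb := leq_div b k; have bc := leq_div2r k (ltnW bn).
have convex : eqprod k.-1 (b - b %/ k) + eqprod k.-1 (n - b) <=
              eqprod k.-1 (n - n %/ k) + eqprod k.-1 (n %/ k - b %/ k).
  by apply: eqprod_convex; lia.
lia.
Qed.

Lemma score_leq_eqpart_succ (u : 'I_k -> nat) : k <= n.+1 ->
  \sum_i u i = n.+1 -> (forall i, u i < n.+1) -> score k u <= score k (eqpart k n.+1).
Proof.
move=> kn su un; have k0 : 0 < k by lia.
have [i0 maxu] : {i0 | \max_i u i = u i0} by apply: eq_bigmax; rewrite card_ord.
have ule j : u j <= u i0 by rewrite -maxu leq_bigmax.
have sum_le : n.+1 <= k * u i0.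
  by rewrite -su -[X in X * _]card_ord -sum_nat_const; apply: leq_sum.
have [b ui0] : exists b, u i0 = b.+1.
  by case: (u i0) sum_le => [|b]; [rewrite muln0 | exists b].
have bn : b < n by rewrite -ltnS -ui0.
pose u' j := if j == i0 then b else u j.
have u'E j : j \in [set~ i0] -> u' j = u j by rewrite in_setC1 /u' => /negbTE ->.
have sum_rest : \sum_(j in [set~ i0]) u j = n - b.
  by move: su; rewrite (bigC1 _ i0) ui0 /=; lia.
have u_rest j : j \in [set~ i0] -> u j <= n - b.
  by move=> j_i0; rewrite -sum_rest (big_setD1 j j_i0) leq_addr.
have score_u' : score k u' <= g k n.
  apply: score_leq_g => [|j].
    by rewrite (bigC1 _ i0) (eq_bigr _ u'E) /= /u' eqxx sum_rest subnKC // ltnW.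
  rewrite /u'; case: eqP => [_|/eqP j_i0] //.
  have := ule j; have := u_rest j; rewrite in_setC1 j_i0 ui0; lia.
have prod_rest : \prod_(j in [set~ i0]) u j <= eqprod k.-1 (n - b).
  by rewrite -sum_rest -[k in k.-1]card_ord -(cardsC1 i0); apply: prod_leq_eqprod.
have b_range : n %/ k <= b < n.
  by rewrite bn andbT -ltnS ltn_divLR // mulnC -ui0.
have split_i0 v : {in [set~ i0], v =1 u} -> score k v =
    g k (v i0) + \sum_(j in [set~ i0]) g k (u j) + v i0 * \prod_(j in [set~ i0]) u j.
  by move=> vu; rewrite /score !(bigC1 _ i0) /=; congr (_ + _ + _ * _); apply: eq_bigr => j /vu ->.
have := g_incr_leq_div b_range; have := score_eqpartS n k0.
move: score_u'; rewrite IHg // (split_i0 u') // (split_i0 u) // ui0 /u' eqxx.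
nia.
Qed.

Lemma g_eqpart_succ : g k n.+1 = score k (eqpart k n.+1).
Proof.
have [nk|kn] := ltnP n.+1 k; first by rewrite g_small // score_eqpart_small // ltnW.
apply/eqP; rewrite eqn_leq score_eqpart_leq_g // andbT.
by apply: g_leq_of_score => // u; apply: score_leq_eqpart_succ.
Qed.

Lemma g_incr_bound_succ : g_incr_bound k n.
Proof.
move=> b /andP[cb bn]; have k0 : 0 < k by lia.
have := score_eqpartS n k0; rewrite -(IHg (leqnn n)) -g_eqpart_succ.
have [b_lt_n|n_le_b] := ltnP b n.
  by have := g_incr_leq_div (introT andP (conj cb b_lt_n)); lia.
have -> : b = n by lia.
by rewrite subnn eqprodn0 //; lia.
Qed.

End InductionStep.

Lemma g_eqpart_incr_bound k n : 2 < k ->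
  (forall m, m <= n -> g k m = score k (eqpart k m)) /\ (forall m, m < n -> g_incr_bound k m).
Proof.
move=> k2; elim: n => [|n [IHg IHincr]].
  split=> // m; rewrite leqn0 => /eqP ->.
  by rewrite g_small ?score_eqpart_small //; lia.
split=> m.
  rewrite leq_eqVlt ltnS => /orP[/eqP -> | /IHg //].
  exact: g_eqpart_succ k2 IHg IHincr.
rewrite ltnS leq_eqVlt => /orP[/eqP -> | /IHincr //].
exact: g_incr_bound_succ k2 IHg IHincr.
Qed.

Lemma g_eqpart k n : 2 < k -> g k n = score k (eqpart k n).
Proof. by move=> k2; have [IHg _] := g_eqpart_incr_bound k n k2; apply: IHg. Qed.

Theorem lemma4p2 (k n : nat) : 3 <= k -> k <= n ->
  exists t : {ffun 'I_k -> nat},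
    [/\ \sum_(i < k) t i = n,
        (forall i j : 'I_k, i != j -> t i - t j <= 1) &
        g k n = \sum_(i < k) g k (t i) + \prod_(i < k) t i].
Proof.
move=> k3 _; have k0 : 0 < k by lia.
exists [ffun i => eqpart k n i]; split.
- by rewrite -[RHS](sum_eqpart k n k0); apply: eq_bigr => i _; rewrite ffunE.
- by move=> i j _; rewrite !ffunE eqpart_diff.
- rewrite (g_eqpart k n k3) /score.
  by congr (_ + _); apply: eq_bigr => i _; rewrite ffunE.
Qed.
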